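(* Let $n \ge 2$ and let $Q(x) = x_1x_2 + x_3x_4 + \cdots + x_{2n-1}x_{2n}$ be the hyperbolic quadratic form on $V(2n,2)$. Let $\Pi$ and $\Sigma$ be two totally singular $n$-dimensional subspaces with $\Pi \cap \Sigma = 0$. If $Y$ is a singular point with $Y \not\subseteq \Pi$ and $Y \not\subseteq \Sigma$, then there is a unique $2$-dimensional subspace (line) $J$ containing $Y$ such that $J \cap \Pi \neq 0$ and $J \cap \Sigma \neq 0$; moreover this line $J$ is totally singular.
   Context: Points are $1$-dimensional subspaces, lines are $2$-dimensional subspaces. A point $\langle y\rangle$ is singular if $Q(y)=0$; a subspace is totally singular if all its points are singular. *)

From HB Require Import structures.
From mathcomp Require Import all_boot all_order all_algebra.
Set Implicit Arguments. Unset Strict Implicit. Unset Printing Implicit Defensive.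
Import GRing.Theory.
Local Open Scope ring_scope.

(* The ambient space V(2n,2) = row vectors of length 2n over GF(2).
   Coordinates are indexed 0..2n-1, so x_{2i+1} x_{2i+2} (1-based) is
   x (2i) * x (2i+1) (0-based). *)
Notation V n := 'rV['F_2]_(n.*2).

Lemma pair_fst_proof n (i : 'I_n) : (i.*2 < n.*2)%N.
Proof. by rewrite ltn_double. Qed.

Lemma pair_snd_proof n (i : 'I_n) : (i.*2.+1 < n.*2)%N.
Proof. by rewrite -doubleS leq_double. Qed.

Definition pair_fst n (i : 'I_n) : 'I_(n.*2) := Ordinal (pair_fst_proof i).
Definition pair_snd n (i : 'I_n) : 'I_(n.*2) := Ordinal (pair_snd_proof i).

Definition hypQ n (x : V n) : 'F_2 :=
  \sum_(i < n) x 0 (pair_fst i) * x 0 (pair_snd i).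

Definition totally_singular n (U : {vspace V n}) : Prop :=
  forall y, y \in U -> hypQ y = 0.

Definition singular_point n (Y : {vspace V n}) : Prop :=
  \dim Y = 1%N /\ totally_singular Y.

From HB Require Import structures.
From mathcomp Require Import all_boot all_order all_algebra.
Set Implicit Arguments. Unset Strict Implicit. Unset Printing Implicit Defensive.
Import GRing.Theory.
Local Open Scope ring_scope.

(* Since Pi and Sigma meet trivially and have complementary dimensions,
   V = Pi (+) Sigma, so y = p + s uniquely with p in Pi and s in Sigma, both
   nonzero because y lies in neither.  A line through y meeting Pi and Sigma is
   spanned by a point of each, and uniqueness of the decomposition of y forces
   it to be <p, s>.  Over GF(2) this line is {0, p, s, y}, all singular. *)

Lemma vline_of_dimv1 (K : fieldType) (vT : vectType K) (Y : {vspace vT}) :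
  \dim Y = 1%N -> exists y, Y = <[y]>%VS.
Proof.
move=> dY; have Y0 : Y != 0%VS by rewrite -dimv_eq0 dY.
exists (vpick Y); apply/eqP.
by rewrite eq_sym eqEdim -memvE memv_pick dY dim_vline vpick0 Y0.
Qed.

Lemma capv_neq0 (K : fieldType) (vT : vectType K) (U V : {vspace vT}) u :
  u \in U -> u \in V -> u != 0 -> (U :&: V != 0)%VS.
Proof.
by move=> uU uV; apply: contraNneq => UV0; rewrite -memv0 -UV0 memv_cap uU.
Qed.

Section ComplementaryTransversal.

Variables (K : fieldType) (vT : vectType K) (P S : {vspace vT}).
Hypothesis PS0 : (P :&: S = 0)%VS.

Definition transversal_line (Y J : {vspace vT}) : Prop :=
  [/\ \dim J = 2%N, (Y <= J)%VS, (J :&: P)%VS != 0%VS & (J :&: S)%VS != 0%VS].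

Lemma addv_eq_fullv : (\dim P + \dim S)%N = dim vT -> (P + S = fullv)%VS.
Proof.
move=> dPS; apply/eqP; rewrite eqEdim subvf dimvf.
by rewrite dimv_disjoint_sum // dPS andTb.
Qed.

Lemma dim_add_vline p s :
  p \in P -> s \in S -> p != 0 -> s != 0 -> \dim (<[p]> + <[s]>) = 2%N.
Proof.
move=> pP sS p0 s0; rewrite dimv_disjoint_sum ?dim_vline ?p0 ?s0 //.
by apply/eqP; rewrite -subv0 -PS0 capvS // -memvE.
Qed.

Lemma transversal_line_add y p s :
  p \in P -> s \in S -> y = p + s -> p != 0 -> s != 0 ->
  transversal_line <[y]> (<[p]> + <[s]>).
Proof.
move=> pP sS -> p0 s0; split; first exact: dim_add_vline.
- by rewrite -memvE memv_add ?memv_line.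
- by apply: (capv_neq0 _ pP p0); rewrite memvE addvSl.
- by apply: (capv_neq0 _ sS s0); rewrite memvE addvSr.
Qed.

Lemma transversal_line_uniq y p s J :
  p \in P -> s \in S -> y = p + s -> p != 0 -> s != 0 ->
  transversal_line <[y]> J -> J = (<[p]> + <[s]>)%VS.
Proof.
move=> pP sS ey p0 s0 [dJ yJ JP JS].
have /memv_capP[p'J p'P] := memv_pick (J :&: P).
have /memv_capP[s'J s'S] := memv_pick (J :&: S).
set p' := vpick _ in p'J p'P; set s' := vpick _ in s'J s'S.
have eJ : J = (<[p']> + <[s']>)%VS.
  apply/eqP; rewrite eq_sym eqEdim subv_add -!memvE p'J s'J dJ.
  by rewrite dim_add_vline ?vpick0.
have : y \in J by rewrite memvE.
rewrite {1}eJ => /memv_addP[_ /vlineP[a ->] [_ /vlineP[b ->] ey']].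
have /directv_add_unique dxPS : directv (P + S) by apply/directv_addP.
have /eqP : p + s = a *: p' + b *: s' by rewrite -ey.
rewrite dxPS ?rpredZ // => /eqP[ep es].
have pJ : p \in J by rewrite ep rpredZ.
have sJ : s \in J by rewrite es rpredZ.
by apply/eqP; rewrite eq_sym eqEdim subv_add -!memvE pJ sJ dJ dim_add_vline.
Qed.

End ComplementaryTransversal.

Lemma F2P (a : 'F_2) : a = 0 \/ a = 1.
Proof. by case: a => -[|[|//]] i; [left | right]; apply: val_inj. Qed.

Lemma memv_add_vline_F2 (vT : vectType 'F_2) (u v z : vT) :
  z \in (<[u]> + <[v]>)%VS -> z \in [:: 0; u; v; u + v].
Proof.
case/memv_addP => _ /vlineP[a ->] [_ /vlineP[b ->] ->].
by case: (F2P a) (F2P b) => -> [] ->;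
  rewrite ?scale0r ?scale1r ?addr0 ?add0r !inE eqxx ?orbT.
Qed.

Lemma hypQ0 n : hypQ (0 : V n) = 0.
Proof. by rewrite /hypQ big1 // => i _; rewrite mxE mul0r. Qed.

Lemma totally_singular_add_vline n (u v : V n) :
  hypQ u = 0 -> hypQ v = 0 -> hypQ (u + v) = 0 ->
  totally_singular (<[u]> + <[v]>)%VS.
Proof.
move=> Qu Qv Quv z /memv_add_vline_F2; rewrite !inE => /or4P[] /eqP-> //.
exact: hypQ0.
Qed.

Theorem mainTheorem3 (n : nat) (hn : (2 <= n)%N)
    (Pi Sigma Y : {vspace 'rV['F_2]_(n.*2)}) :
  \dim Pi = n -> totally_singular Pi ->
  \dim Sigma = n -> totally_singular Sigma ->
  (Pi :&: Sigma)%VS = 0%VS ->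
  singular_point Y -> ~~ (Y <= Pi)%VS -> ~~ (Y <= Sigma)%VS ->
  exists J : {vspace 'rV['F_2]_(n.*2)},
    [/\ \dim J = 2%N, (Y <= J)%VS, (J :&: Pi)%VS != 0%VS & (J :&: Sigma)%VS != 0%VS] /\
    (forall J' : {vspace 'rV['F_2]_(n.*2)},
       \dim J' = 2%N -> (Y <= J')%VS -> (J' :&: Pi)%VS != 0%VS ->
       (J' :&: Sigma)%VS != 0%VS -> J' = J) /\
    totally_singular J.
Proof.
move=> dP tsP dS tsS PS0 [dY tsY] YP YS.
have [y eY] := vline_of_dimv1 dY; subst Y.
have : y \in (Pi + Sigma)%VS.
  by rewrite addv_eq_fullv ?memvf // dP dS addnn /dim /= mul1n.
case/memv_addP => p pP [s sS ey].
have p0 : p != 0 by apply: contraNneq YS => p0; rewrite -memvE ey p0 add0r.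
have s0 : s != 0 by apply: contraNneq YP => s0; rewrite -memvE ey s0 addr0.
exists (<[p]> + <[s]>)%VS; split; [exact: transversal_line_add | split].
- by move=> J dJ yJ JP JS; apply: (transversal_line_uniq PS0 pP sS ey).
- apply: totally_singular_add_vline; [exact: tsP | exact: tsS |].
  by rewrite -ey; apply/tsY/memv_line.
Qed.
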